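(* Let $0<\kappa<1$, $\lambda=\sqrt{1-\kappa^2}$, and let $k\in(0,1)$ be defined by $k^2=\frac{1-\lambda}{1+\lambda}$. For $\phi$ near $0$ define $$u(\phi)=\int_0^{\phi} F\!\left(\tfrac14,\tfrac34;\tfrac12;\kappa^2\sin^2\theta\right)\,\mathrm{d}\theta ,$$ let $u\mapsto\phi(u)$ be the local inverse near $0$ with $\phi(0)=0$, and set $c(u)=\cos\phi(u)$. Let $\mathrm{cn},\mathrm{dn}$ be the Jacobian elliptic functions of modulus $k$. Then $$c^2(u)=\mathrm{cn}^2\!\left[(1+k^2)^{-1/2}u\right]\,\mathrm{dn}^2\!\left[(1+k^2)^{-1/2}u\right].$$
   Context: $F(a,b;c;z)$ denotes the Gauss hypergeometric function ${}_2F_1(a,b;c;z)$. $\mathrm{sn},\mathrm{cn},\mathrm{dn}$ are the standard Jacobian elliptic functions of modulus $k$. The identity holds near $u=0$ (and hence for the meromorphic extension of $c^2$). *)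

From Stdlib Require Import Reals ClassicalEpsilon.
From Coquelicot Require Import Coquelicot.
Open Scope R_scope.

Fixpoint poch (a : R) (n : nat) : R :=
  match n with
  | O => 1
  | S m => poch a m * (a + INR m)
  end.

Definition hyp2F1 (a b c z : R) : R :=
  Series (fun n => poch a n * poch b n / (poch c n * INR (Factorial.fact n)) * z ^ n).

Definition ellF (k phi : R) : R :=
  RInt (fun t => / sqrt (1 - k ^ 2 * sin t ^ 2)) 0 phi.

(* Jacobi amplitude: the (for 0 <= k < 1 unique) phi with ellF k phi = u. *)
Definition jam (k u : R) : R :=
  epsilon (inhabits 0) (fun phi => ellF k phi = u).

Definition jsn (k u : R) : R := sin (jam k u).
Definition jcn (k u : R) : R := cos (jam k u).
Definition jdn (k u : R) : R := sqrt (1 - k ^ 2 * jsn k u ^ 2).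

(* F(1/4,3/4;1/2;x^2) is the even part of the binomial series of (1 - x)^(-1/2), so
   u(phi) integrates G(th) = ((1 - kappa sin th)^(-1/2) + (1 + kappa sin th)^(-1/2)) / 2 >= 1;
   u is therefore a strictly increasing bijection of R and phi is its inverse.
   As kappa = 2k / (1 + k^2), Landen's substitution sin phi = sin psi * A with
   A = sqrt (1 + k^2 cos^2 psi) makes both radicands perfect squares,
   1 -+ kappa sin phi = (A -+ k sin psi)^2 / (1 + k^2), and turns G(phi) dphi into
   sqrt (1 + k^2) dpsi / sqrt (1 - k^2 sin^2 psi).  Hence u = sqrt (1 + k^2) F(psi, k), i.e.
   psi = am (u / sqrt (1 + k^2)), and cos^2 phi = 1 - sin^2 psi (1 + k^2 cos^2 psi)
   = cn^2 dn^2. *)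

From Stdlib Require Import Reals Lra Lia Psatz ClassicalEpsilon.
From Coquelicot Require Import Coquelicot.
Open Scope R_scope.

Lemma poch_S a n : poch a (S n) = poch a n * (a + INR n).
Proof. reflexivity. Qed.

Lemma poch_gt0 a n : 0 < a -> 0 < poch a n.
Proof.
  intros Ha; induction n as [|n IH]; simpl; [lra|].
  pose proof (pos_INR n); apply Rmult_lt_0_compat; lra.
Qed.

Lemma poch_1 n : poch 1 n = INR (Factorial.fact n).
Proof.
  induction n as [|n IH]; [reflexivity|].
  rewrite poch_S, IH; change (Factorial.fact (S n)) with (S n * Factorial.fact n)%nat.
  rewrite mult_INR, S_INR; ring.
Qed.

Lemma poch_duplication a n :
  poch a (2 * n) = 4 ^ n * poch (a / 2) n * poch ((a + 1) / 2) n.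
Proof.
  induction n as [|n IH]; [simpl; ring|].
  replace (2 * S n)%nat with (S (S (2 * n))) by lia.
  rewrite !poch_S, IH, S_INR, mult_INR; simpl INR.
  change (4 ^ S n) with (4 * 4 ^ n); field.
Qed.

Lemma fact_duplication n :
  INR (Factorial.fact (2 * n)) = 4 ^ n * INR (Factorial.fact n) * poch (1 / 2) n.
Proof.
  rewrite <- !poch_1, poch_duplication.
  replace ((1 + 1) / 2) with 1 by field; ring.
Qed.

Definition binom_half (m : nat) : R := poch (1 / 2) m / INR (Factorial.fact m).

Lemma binom_half_S m :
  INR (S m) * binom_half (S m) = (INR m + 1 / 2) * binom_half m.
Proof.
  unfold binom_half; simpl poch.
  change (Factorial.fact (S m)) with (S m * Factorial.fact m)%nat.
  rewrite mult_INR, S_INR. pose proof (INR_fact_lt_0 m); pose proof (pos_INR m).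
  field; lra.
Qed.

Lemma binom_half_bounds m : 0 <= binom_half m <= 1.
Proof.
  induction m as [|m IH]; [unfold binom_half; simpl; lra|].
  pose proof (binom_half_S m) as Hrec; rewrite S_INR in Hrec.
  pose proof (pos_INR m); split; nra.
Qed.

Lemma hyp2F1_quarter_coef n :
  poch (1 / 4) n * poch (3 / 4) n / (poch (1 / 2) n * INR (Factorial.fact n))
  = binom_half (2 * n).
Proof.
  unfold binom_half; rewrite fact_duplication, poch_duplication.
  replace (1 / 2 / 2) with (1 / 4) by field.
  replace ((1 / 2 + 1) / 2) with (3 / 4) by field.
  pose proof (INR_fact_lt_0 n); pose proof (poch_gt0 (1 / 2) n ltac:(lra)).
  pose proof (pow_lt 4 n ltac:(lra)).
  field; repeat split; lra.
Qed.

Lemma abs_lt_CV_radius (b : nat -> R) x :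
  (forall n, Rabs (b n) <= 1) -> Rabs x < 1 -> Rbar_lt (Rabs x) (CV_radius b).
Proof.
  intros Hb Hx.
  assert (H1 : Rbar_le 1 (CV_radius b)).
  { apply CV_radius_bounded; exists 1; intros n.
    rewrite pow1, Rmult_1_r; apply Hb. }
  destruct (CV_radius b) as [r| |]; simpl in *; auto; lra.
Qed.

Lemma binom_half_radius x : Rabs x < 1 -> Rbar_lt (Rabs x) (CV_radius binom_half).
Proof.
  apply abs_lt_CV_radius; intros n.
  rewrite Rabs_pos_eq; apply binom_half_bounds.
Qed.

Lemma binom_half_ode y : -1 < y < 1 ->
  (1 - y) * PSeries (PS_derive binom_half) y = 1 / 2 * PSeries binom_half y.
Proof.
  intros Hy.
  assert (Hr : Rbar_lt (Rabs y) (CV_radius binom_half))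
    by (apply binom_half_radius, Rabs_def1; lra).
  pose proof (PSeries_correct _ _ (ex_pseries_derive _ _ Hr)) as Hd.
  pose proof (PSeries_correct _ _ (CV_radius_inside _ _ Hr)) as Hf.
  assert (Hsum := is_pseries_plus _ _ _ _ _ (is_pseries_incr_1 _ _ _ Hd)
                    (is_pseries_scal (1 / 2) _ _ _ (Rmult_comm _ _) Hf)).
  assert (Heq : PSeries (PS_derive binom_half) y
          = y * PSeries (PS_derive binom_half) y + 1 / 2 * PSeries binom_half y).
  { apply is_pseries_unique; revert Hsum; apply is_pseries_ext; intros n.
    unfold PS_plus, PS_incr_1, PS_scal, PS_derive, plus, scal, mult, zero; cbn -[INR binom_half].
    destruct n as [|n]; [rewrite (binom_half_S 0); simpl | rewrite (binom_half_S (S n))]; ring. }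
  lra.
Qed.

Lemma binom_half_series x : -1 < x < 1 -> PSeries binom_half x = / sqrt (1 - x).
Proof.
  intros Hx.
  set (h := fun y => PSeries binom_half y * sqrt (1 - y)).
  assert (Hh' : forall y, -1 < y < 1 -> is_derive h y 0).
  { intros y Hy.
    assert (Hr : Rbar_lt (Rabs y) (CV_radius binom_half))
      by (apply binom_half_radius, Rabs_def1; lra).
    assert (Hs : is_derive (fun t => sqrt (1 - t)) y (-1 / (2 * sqrt (1 - y)))).
    { auto_derive; [lra|]. unfold Rminus; field. apply Rgt_not_eq, sqrt_lt_R0; lra. }
    assert (Hq : sqrt (1 - y) * sqrt (1 - y) = 1 - y) by (apply sqrt_sqrt; lra).
    assert (0 < sqrt (1 - y)) by (apply sqrt_lt_R0; lra).
    pose proof (binom_half_ode y Hy) as Hode.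
    pose proof (is_derive_mult _ _ _ _ _ (is_derive_PSeries _ _ Hr) Hs Rmult_comm) as Hd.
    unfold h; match type of Hd with is_derive _ _ ?d => replace 0 with d; [exact Hd|] end.
    unfold plus, mult; simpl.
    apply Rmult_eq_reg_r with (2 * sqrt (1 - y)); [|lra].
    field_simplify; [nra|lra]. }
  assert (Hh0 : h 0 = 1).
  { unfold h; rewrite PSeries_0, Rminus_0_r, sqrt_1; unfold binom_half; simpl; lra. }
  assert (Hhx : h x = 1).
  { rewrite <- Hh0; destruct (Rtotal_order x 0) as [Hlt|[->|Hgt]]; [| reflexivity |].
    - apply eq_is_derive; [intros t Ht; apply Hh'; lra | exact Hlt].
    - symmetry; apply eq_is_derive; [intros t Ht; apply Hh'; lra | exact Hgt]. }
  unfold h in Hhx. assert (0 < sqrt (1 - x)) by (apply sqrt_lt_R0; lra).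
  apply Rmult_eq_reg_r with (sqrt (1 - x)); [|lra]. rewrite Hhx; field; lra.
Qed.

Lemma hyp2F1_quarter x : -1 < x < 1 ->
  hyp2F1 (1 / 4) (3 / 4) (1 / 2) (x ^ 2) = (/ sqrt (1 - x) + / sqrt (1 + x)) / 2.
Proof.
  intros Hx. unfold hyp2F1.
  rewrite (Series_ext _ (fun n => binom_half (2 * n) * (x ^ 2) ^ n))
    by (intros n; rewrite hyp2F1_quarter_coef; reflexivity).
  change (Series (fun n => binom_half (2 * n) * (x ^ 2) ^ n))
    with (PSeries (fun n => binom_half (2 * n)) (x ^ 2)).
  assert (Hx2 : Rabs (x ^ 2) < 1) by (rewrite Rabs_pos_eq; nra).
  assert (Hev : ex_pseries (fun n => binom_half (2 * n)) (x ^ 2)).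
  { apply CV_radius_inside, abs_lt_CV_radius; [|exact Hx2].
    intros n; rewrite Rabs_pos_eq; apply binom_half_bounds. }
  assert (Hod : ex_pseries (fun n => binom_half (2 * n + 1)) (x ^ 2)).
  { apply CV_radius_inside, abs_lt_CV_radius; [|exact Hx2].
    intros n; rewrite Rabs_pos_eq; apply binom_half_bounds. }
  pose proof (PSeries_odd_even binom_half x Hev Hod) as Hplus.
  pose proof (PSeries_odd_even binom_half (- x)) as Hminus.
  replace ((- x) ^ 2) with (x ^ 2) in Hminus by ring.
  specialize (Hminus Hev Hod).
  rewrite binom_half_series in Hplus, Hminus by lra.
  replace (1 - - x) with (1 + x) in Hminus by ring.
  lra.
Qed.

Section Primitive.

Variable f : R -> R.
Hypothesis f_continuous : forall x, continuous f x.
Hypothesis f_ge1 : forall x, 1 <= f x.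

Lemma ex_RInt_f a b : ex_RInt f a b.
Proof. apply (@ex_RInt_continuous R_CompleteNormedModule); intros; apply f_continuous. Qed.

Lemma primitive_sub_ge a b : a <= b -> b - a <= RInt f 0 b - RInt f 0 a.
Proof.
  intros Hab.
  rewrite <- (RInt_Chasles f 0 a b) by apply ex_RInt_f.
  assert (b - a <= RInt f a b).
  { replace (b - a) with (RInt (fun _ => 1) a b).
    - apply RInt_le; [exact Hab | apply ex_RInt_const | apply ex_RInt_f | intros; apply f_ge1].
    - rewrite RInt_const; unfold scal; simpl; unfold mult; simpl; ring. }
  unfold plus; simpl; lra.
Qed.

Lemma primitive_0 : RInt f 0 0 = 0.
Proof. exact (RInt_point (V := R_CompleteNormedModule) 0 f). Qed.

Lemma primitive_inj a b : RInt f 0 a = RInt f 0 b -> a = b.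
Proof.
  intros Hab; destruct (Rtotal_order a b) as [Hlt|[Heq|Hgt]]; [| exact Heq |].
  - pose proof (primitive_sub_ge a b (Rlt_le _ _ Hlt)); lra.
  - pose proof (primitive_sub_ge b a (Rlt_le _ _ Hgt)); lra.
Qed.

Lemma Rabs_le_primitive p : Rabs p <= Rabs (RInt f 0 p).
Proof.
  destruct (Rle_lt_dec 0 p) as [Hp|Hp].
  - pose proof (primitive_sub_ge 0 p Hp); rewrite primitive_0 in H.
    rewrite !Rabs_pos_eq; lra.
  - pose proof (primitive_sub_ge p 0 (Rlt_le _ _ Hp)); rewrite primitive_0 in H.
    rewrite !Rabs_left; lra.
Qed.

Lemma primitive_continuity : continuity (fun p => RInt f 0 p).
Proof.
  intros x; apply continuity_pt_filterlim, (ex_derive_continuous (fun p => RInt f 0 p)).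
  exists (f x); apply is_derive_RInt with 0; [|apply f_continuous].
  apply filter_forall; intros; apply RInt_correct, ex_RInt_f.
Qed.

Lemma primitive_surj v : exists p, RInt f 0 p = v.
Proof.
  pose proof (Rabs_pos v).
  pose proof (primitive_sub_ge 0 (Rabs v) ltac:(lra)) as Hup.
  pose proof (primitive_sub_ge (- Rabs v) 0 ltac:(lra)) as Hlow.
  rewrite primitive_0 in Hup, Hlow.
  pose proof (Rle_abs v); pose proof (Rle_abs (- v)); rewrite Rabs_Ropp in *.
  destruct (IVT_gen (fun p => RInt f 0 p) (- Rabs v) (Rabs v) v primitive_continuity)
    as [p [_ Hp]]; [|exists p; exact Hp].
  split; [eapply Rle_trans; [apply Rmin_l|] | eapply Rle_trans; [|apply Rmax_r]]; lra.
Qed.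

End Primitive.

Lemma is_derive_asin x : -1 < x < 1 -> is_derive asin x (/ sqrt (1 - x ^ 2)).
Proof.
  intros Hx; apply is_derive_Reals, derive_pt_eq_1 with (derivable_pt_asin _ Hx).
  rewrite derive_pt_asin, Rsqr_pow2; unfold Rdiv; apply Rmult_1_l.
Qed.

Lemma sq_mul_sq_bounds k s :
  -1 < k < 1 -> -1 <= s <= 1 -> 0 <= k ^ 2 * s ^ 2 <= k ^ 2 /\ k ^ 2 < 1.
Proof.
  intros Hk Hs; assert (0 <= s ^ 2 <= 1) by nra.
  assert (0 <= k ^ 2 < 1) by nra. split; [split|]; nra.
Qed.

Definition hyp_integrand (kap th : R) : R :=
  (/ sqrt (1 - kap * sin th) + / sqrt (1 + kap * sin th)) / 2.

Definition ell_integrand (k t : R) : R := / sqrt (1 - k ^ 2 * sin t ^ 2).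

Lemma kappa_sin_bounds kap th : -1 < kap < 1 -> -1 < kap * sin th < 1.
Proof.
  intros Hk; cut (Rabs (kap * sin th) < 1); [intros H; apply Rabs_def2 in H; lra|].
  rewrite Rabs_mult.
  assert (Rabs (sin th) <= 1) by apply Rabs_le, SIN_bound.
  assert (Rabs kap < 1) by (apply Rabs_def1; lra).
  pose proof (Rabs_pos kap); pose proof (Rabs_pos (sin th)); nra.
Qed.

Lemma hyp2F1_quarter_sin kap th : -1 < kap < 1 ->
  hyp2F1 (1 / 4) (3 / 4) (1 / 2) (kap ^ 2 * sin th ^ 2) = hyp_integrand kap th.
Proof.
  intros Hk; replace (kap ^ 2 * sin th ^ 2) with ((kap * sin th) ^ 2) by ring.
  apply hyp2F1_quarter, kappa_sin_bounds, Hk.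
Qed.

Lemma inv_sqrt_mean_ge1 t : -1 < t < 1 -> 1 <= (/ sqrt (1 - t) + / sqrt (1 + t)) / 2.
Proof.
  intros Ht.
  set (p := sqrt (1 + t)); set (q := sqrt (1 - t)).
  assert (0 < p) by (apply sqrt_lt_R0; lra).
  assert (0 < q) by (apply sqrt_lt_R0; lra).
  assert (Hp : p * p = 1 + t) by (apply sqrt_sqrt; lra).
  assert (Hq : q * q = 1 - t) by (apply sqrt_sqrt; lra).
  assert (Hpq2 : (p * q) * (p * q) <= 1)
    by (replace ((p * q) * (p * q)) with ((p * p) * (q * q)) by ring; rewrite Hp, Hq; nra).
  assert (p * q <= 1) by nra.
  assert (2 * (p * q) <= p + q) by nra.
  apply Rmult_le_reg_r with (2 * p * q); [nra|].
  field_simplify; lra.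
Qed.

Lemma hyp_integrand_ge1 kap th : -1 < kap < 1 -> 1 <= hyp_integrand kap th.
Proof. intros Hk; apply inv_sqrt_mean_ge1, kappa_sin_bounds, Hk. Qed.

Lemma hyp_integrand_continuous kap th : -1 < kap < 1 -> continuous (hyp_integrand kap) th.
Proof.
  intros Hk; apply (ex_derive_continuous (hyp_integrand kap)).
  pose proof (kappa_sin_bounds kap th Hk).
  unfold hyp_integrand; auto_derive; repeat split; try lra;
    apply Rgt_not_eq, sqrt_lt_R0; lra.
Qed.

Lemma ell_integrand_ge1 k t : -1 < k < 1 -> 1 <= ell_integrand k t.
Proof.
  intros Hk; pose proof (sq_mul_sq_bounds k _ Hk (SIN_bound t)).
  assert (0 < sqrt (1 - k ^ 2 * sin t ^ 2)) by (apply sqrt_lt_R0; lra).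
  assert (sqrt (1 - k ^ 2 * sin t ^ 2) <= 1)
    by (rewrite <- sqrt_1 at 2; apply sqrt_le_1_alt; lra).
  unfold ell_integrand; rewrite <- Rinv_1 at 1; apply Rinv_le_contravar; lra.
Qed.

Lemma ell_integrand_continuous k t : -1 < k < 1 -> continuous (ell_integrand k) t.
Proof.
  intros Hk; apply (ex_derive_continuous (ell_integrand k)).
  pose proof (sq_mul_sq_bounds k _ Hk (SIN_bound t)).
  unfold ell_integrand; auto_derive; repeat split; try lra.
  apply Rgt_not_eq, sqrt_lt_R0; lra.
Qed.

Definition landen_amp (k s : R) : R := sqrt (1 + k ^ 2 - k ^ 2 * s ^ 2).
Definition landen (k y : R) : R := asin (sin y * landen_amp k (sin y)).
Definition landen_deriv (k y : R) : R :=
  (1 + k ^ 2 - 2 * k ^ 2 * sin y ^ 2)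
  / (landen_amp k (sin y) * sqrt (1 - k ^ 2 * sin y ^ 2)).

Section Landen.

Variable k : R.
Hypothesis k_bounds : -1 < k < 1.

Lemma landen_amp_sq s : -1 <= s <= 1 -> landen_amp k s ^ 2 = 1 + k ^ 2 - k ^ 2 * s ^ 2.
Proof. intros Hs; pose proof (sq_mul_sq_bounds k s k_bounds Hs); apply pow2_sqrt; lra. Qed.

Lemma landen_amp_gt_abs s : -1 <= s <= 1 -> Rabs (k * s) < landen_amp k s.
Proof.
  intros Hs; pose proof (landen_amp_sq s Hs); pose proof (sq_mul_sq_bounds k s k_bounds Hs).
  assert (0 <= landen_amp k s) by apply sqrt_pos.
  assert (k ^ 2 * s ^ 2 < landen_amp k s ^ 2) by nra.
  apply Rabs_def1; nra.
Qed.

Lemma one_sub_landen_sq s : -1 <= s <= 1 ->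
  1 - (s * landen_amp k s) ^ 2 = (1 - s ^ 2) * (1 - k ^ 2 * s ^ 2).
Proof.
  intros Hs; replace ((s * landen_amp k s) ^ 2) with (s ^ 2 * landen_amp k s ^ 2) by ring.
  rewrite landen_amp_sq by exact Hs; ring.
Qed.

Lemma landen_sq_le1 s : -1 <= s <= 1 -> (s * landen_amp k s) ^ 2 <= 1.
Proof.
  intros Hs; pose proof (one_sub_landen_sq s Hs); pose proof (sq_mul_sq_bounds k s k_bounds Hs).
  assert (0 <= (1 - s ^ 2) * (1 - k ^ 2 * s ^ 2)) by (apply Rmult_le_pos; nra).
  lra.
Qed.

Lemma sin_landen y : sin (landen k y) = sin y * landen_amp k (sin y).
Proof.
  pose proof (landen_sq_le1 _ (SIN_bound y)).
  apply sin_asin; split; nra.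
Qed.

Lemma landen_0 : landen k 0 = 0.
Proof. unfold landen; rewrite sin_0, Rmult_0_l; apply asin_0. Qed.

Lemma cos_landen_sq y : cos (landen k y) ^ 2 = cos y ^ 2 * (1 - k ^ 2 * sin y ^ 2).
Proof.
  pose proof (sin2_cos2 (landen k y)) as Hl; pose proof (sin2_cos2 y) as Hy.
  rewrite !Rsqr_pow2 in Hl, Hy.
  pose proof (one_sub_landen_sq _ (SIN_bound y)) as Hq.
  rewrite sin_landen in Hl; nra.
Qed.

Lemma is_derive_landen y : -(PI / 2) < y < PI / 2 -> is_derive (landen k) y (landen_deriv k y).
Proof.
  intros Hy; pose proof (cos_gt_0 y ltac:(lra) ltac:(lra)) as Hc.
  pose proof (SIN_bound y) as Hs.
  pose proof (sq_mul_sq_bounds k _ k_bounds Hs); pose proof (landen_amp_sq _ Hs) as HA.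
  assert (HA0 : 0 < landen_amp k (sin y)) by (apply sqrt_lt_R0; lra).
  assert (HB0 : 0 < sqrt (1 - k ^ 2 * sin y ^ 2)) by (apply sqrt_lt_R0; lra).
  set (Q := fun t => sin t * landen_amp k (sin t)).
  assert (HQ : is_derive Q y
                 (cos y * (1 + k ^ 2 - 2 * k ^ 2 * sin y ^ 2) / landen_amp k (sin y))).
  { unfold Q, landen_amp in *; auto_derive; [lra|].
    replace (1 + k * (k * 1) + - (k * (k * 1) * (sin y * (sin y * 1))))
      with (1 + k ^ 2 - k ^ 2 * sin y ^ 2) by ring.
    replace (1 + k ^ 2 - 2 * k ^ 2 * sin y ^ 2)
      with (sqrt (1 + k ^ 2 - k ^ 2 * sin y ^ 2) ^ 2 - k ^ 2 * sin y ^ 2) by lra.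
    field; lra. }
  assert (H1Q : 1 - Q y ^ 2 = (cos y * sqrt (1 - k ^ 2 * sin y ^ 2)) ^ 2).
  { unfold Q; rewrite one_sub_landen_sq by exact Hs.
    rewrite Rpow_mult_distr, pow2_sqrt by lra.
    pose proof (sin2_cos2 y) as Hsc; rewrite !Rsqr_pow2 in Hsc; nra. }
  assert (HQ1 : -1 < Q y < 1).
  { assert (0 < 1 - Q y ^ 2) by (rewrite H1Q; apply pow_lt; nra). split; nra. }
  pose proof (is_derive_comp asin Q y _ _ (is_derive_asin _ HQ1) HQ) as Hcomp.
  rewrite H1Q, sqrt_pow2 in Hcomp by nra.
  match type of Hcomp with
    is_derive _ _ ?d => replace (landen_deriv k y) with d; [exact Hcomp|] end.
  unfold landen_deriv; set (B := sqrt (1 - k ^ 2 * sin y ^ 2)) in *; clearbody B.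
  unfold scal; simpl; unfold mult; simpl; field; lra.
Qed.

Lemma landen_deriv_continuous y : continuous (landen_deriv k) y.
Proof.
  apply (ex_derive_continuous (landen_deriv k)).
  pose proof (sq_mul_sq_bounds k _ k_bounds (SIN_bound y)).
  unfold landen_deriv, landen_amp; auto_derive; repeat split; try lra.
  apply Rgt_not_eq, Rmult_lt_0_compat; apply sqrt_lt_R0; lra.
Qed.

Lemma landen_amp_opp s : landen_amp k (- s) = landen_amp k s.
Proof. unfold landen_amp; f_equal; ring. Qed.

Variable kap : R.
Hypothesis kappa_landen : kap * (1 + k ^ 2) = 2 * k.

Lemma kappa_bounds : -1 < kap < 1.
Proof.
  assert (0 <= k ^ 2) by nra.
  assert (2 * k < 1 + k ^ 2 /\ - (1 + k ^ 2) < 2 * k) by (split; nra).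
  split; nra.
Qed.

Lemma sqrt_one_add_kappa_landen s : -1 <= s <= 1 ->
  sqrt (1 + kap * (s * landen_amp k s)) = (landen_amp k s + k * s) / sqrt (1 + k ^ 2).
Proof.
  intros Hs; pose proof (landen_amp_gt_abs s Hs) as Habs; pose proof (landen_amp_sq s Hs) as HA.
  pose proof (Rle_abs (- (k * s))); rewrite Rabs_Ropp in *.
  assert (Hr : 0 < sqrt (1 + k ^ 2)) by (apply sqrt_lt_R0; nra).
  assert (Hr2 : sqrt (1 + k ^ 2) ^ 2 = 1 + k ^ 2) by (apply pow2_sqrt; nra).
  set (A := landen_amp k s) in *; set (r := sqrt (1 + k ^ 2)) in *; clearbody A r.
  rewrite <- (sqrt_pow2 ((A + k * s) / r)).
  2: { apply Rmult_le_pos; [lra | left; apply Rinv_0_lt_compat, Hr]. }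
  f_equal.
  replace (((A + k * s) / r) ^ 2) with ((A + k * s) ^ 2 / (1 + k ^ 2))
    by (rewrite <- Hr2; field; lra).
  apply Rmult_eq_reg_r with (1 + k ^ 2); [|nra].
  replace ((1 + kap * (s * A)) * (1 + k ^ 2)) with (1 + k ^ 2 + kap * (1 + k ^ 2) * (s * A))
    by ring.
  rewrite kappa_landen; field_simplify; [lra | nra].
Qed.

Lemma hyp_integrand_landen y :
  hyp_integrand kap (landen k y)
  = sqrt (1 + k ^ 2) * landen_amp k (sin y) / (1 + k ^ 2 - 2 * k ^ 2 * sin y ^ 2).
Proof.
  pose proof (SIN_bound y) as Hs.
  assert (Hs' : -1 <= - sin y <= 1) by lra.
  unfold hyp_integrand; rewrite sin_landen.
  replace (1 - kap * (sin y * landen_amp k (sin y)))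
    with (1 + kap * (- sin y * landen_amp k (- sin y))) by (rewrite landen_amp_opp; ring).
  rewrite !sqrt_one_add_kappa_landen, landen_amp_opp by assumption.
  pose proof (landen_amp_gt_abs _ Hs) as Habs; pose proof (landen_amp_sq _ Hs) as HA.
  pose proof (Rle_abs (k * sin y)); pose proof (Rle_abs (- (k * sin y))); rewrite Rabs_Ropp in *.
  assert (Hr : 0 < sqrt (1 + k ^ 2)) by (apply sqrt_lt_R0; nra).
  set (A := landen_amp k (sin y)) in *; set (r := sqrt (1 + k ^ 2)) in *; clearbody A r.
  replace (1 + k ^ 2 - 2 * k ^ 2 * sin y ^ 2) with ((A + k * sin y) * (A - k * sin y)) by nra.
  field; lra.
Qed.

Lemma landen_deriv_hyp_integrand y :
  landen_deriv k y * hyp_integrand kap (landen k y) = sqrt (1 + k ^ 2) * ell_integrand k y.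
Proof.
  pose proof (SIN_bound y) as Hs.
  pose proof (landen_amp_gt_abs _ Hs); pose proof (landen_amp_sq _ Hs).
  pose proof (sq_mul_sq_bounds k _ k_bounds Hs).
  assert (0 < sqrt (1 - k ^ 2 * sin y ^ 2)) by (apply sqrt_lt_R0; lra).
  assert (0 < landen_amp k (sin y)) by (pose proof (Rabs_pos (k * sin y)); lra).
  rewrite hyp_integrand_landen; unfold landen_deriv, ell_integrand.
  field; split; [lra|]; split; [lra|]. nra.
Qed.

Lemma RInt_hyp_integrand_landen psi : Rabs psi < PI / 2 ->
  RInt (hyp_integrand kap) 0 (landen k psi) = sqrt (1 + k ^ 2) * ellF k psi.
Proof.
  intros Hpsi; apply Rabs_def2 in Hpsi.
  rewrite <- landen_0 at 1.
  rewrite <- (RInt_comp (hyp_integrand kap) (landen k) (landen_deriv k)).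
  - rewrite (RInt_ext _ (fun y => scal (sqrt (1 + k ^ 2)) (ell_integrand k y)))
      by (intros; apply landen_deriv_hyp_integrand).
    rewrite (RInt_scal (V := R_CompleteNormedModule)); [reflexivity|].
    apply (@ex_RInt_continuous R_CompleteNormedModule); intros.
    apply ell_integrand_continuous, k_bounds.
  - intros; apply hyp_integrand_continuous, kappa_bounds.
  - intros x Hx; split; [apply is_derive_landen | apply landen_deriv_continuous].
    unfold Rmin, Rmax in Hx; destruct (Rle_dec 0 psi); lra.
Qed.
End Landen.

Lemma ellF_jam k v : -1 < k < 1 -> ellF k (jam k v) = v.
Proof.
  intros Hk; unfold jam; apply epsilon_spec.
  exact (primitive_surj (ell_integrand k) (fun t => ell_integrand_continuous k t Hk)
           (fun t => ell_integrand_ge1 k t Hk) v).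
Qed.

Lemma Rabs_jam_le k v : -1 < k < 1 -> Rabs (jam k v) <= Rabs v.
Proof.
  intros Hk; rewrite <- (ellF_jam k v Hk) at 2.
  exact (Rabs_le_primitive (ell_integrand k) (fun t => ell_integrand_continuous k t Hk)
           (fun t => ell_integrand_ge1 k t Hk) (jam k v)).
Qed.

Lemma landen_modulus kappa : 0 < kappa < 1 ->
  let lam := sqrt (1 - kappa ^ 2) in
  let k := sqrt ((1 - lam) / (1 + lam)) in
  0 < k < 1 /\ kappa * (1 + k ^ 2) = 2 * k.
Proof.
  intros Hkap lam k.
  assert (Hlam2 : lam ^ 2 = 1 - kappa ^ 2) by (apply pow2_sqrt; nra).
  assert (Hlam : 0 < lam < 1).
  { assert (0 < lam) by (apply sqrt_lt_R0; nra). split; nra. }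
  assert (Hk2 : k ^ 2 = (1 - lam) / (1 + lam)).
  { apply pow2_sqrt, Rmult_le_pos; [lra | left; apply Rinv_0_lt_compat; lra]. }
  assert (Hk0 : 0 < k).
  { apply sqrt_lt_R0, Rmult_lt_0_compat; [lra | apply Rinv_0_lt_compat; lra]. }
  assert (Hkappa : kappa = k * (1 + lam)).
  { apply Rsqr_inj; [lra | nra |]. rewrite !Rsqr_pow2, Rpow_mult_distr, Hk2.
    field_simplify; [nra | lra]. }
  split; [split; [exact Hk0|] |].
  - assert (k ^ 2 < 1) by (rewrite Hk2; apply Rmult_lt_reg_r with (1 + lam); [lra|];
      unfold Rdiv; rewrite Rmult_assoc, Rinv_l by lra; lra).
    nra.
  - rewrite Hkappa, Hk2; field; lra.
Qed.

Lemma Rabs_inv_sqrt_one_add_sq_mul_le k u : Rabs (/ sqrt (1 + k ^ 2) * u) <= Rabs u.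
Proof.
  rewrite Rabs_mult, Rabs_inv, Rabs_pos_eq by apply sqrt_pos.
  assert (1 <= sqrt (1 + k ^ 2)) by (rewrite <- sqrt_1 at 1; apply sqrt_le_1_alt; nra).
  apply Rmult_le_reg_l with (sqrt (1 + k ^ 2)); [lra|].
  rewrite <- Rmult_assoc, Rinv_r, Rmult_1_l by lra.
  pose proof (Rabs_pos u); nra.
Qed.

Theorem theorem10 (kappa : R) (phi : R -> R) (delta : R) :
  0 < kappa < 1 ->
  let lam := sqrt (1 - kappa ^ 2) in
  let k := sqrt ((1 - lam) / (1 + lam)) in
  let U := fun p => RInt (fun th => hyp2F1 (1/4) (3/4) (1/2) (kappa ^ 2 * sin th ^ 2)) 0 p in
  0 < delta ->
  phi 0 = 0 ->
  continuous phi 0 ->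
  (forall u, Rabs u < delta -> U (phi u) = u) ->
  exists eps, 0 < eps /\
    forall u, Rabs u < eps ->
      cos (phi u) ^ 2 =
        jcn k (/ sqrt (1 + k ^ 2) * u) ^ 2 * jdn k (/ sqrt (1 + k ^ 2) * u) ^ 2.
Proof.
  intros Hkap lam k U Hdelta _ _ HU.
  assert (0 < k < 1 /\ kappa * (1 + k ^ 2) = 2 * k) as [Hk Hkk] by exact (landen_modulus kappa Hkap).
  assert (Hk' : -1 < k < 1) by lra.
  assert (Hkap' : -1 < kappa < 1) by lra.
  assert (HUe : forall p, U p = RInt (hyp_integrand kappa) 0 p)
    by (intros p; apply RInt_ext; intros; apply hyp2F1_quarter_sin, Hkap').
  exists (Rmin delta 1); split; [apply Rmin_glb_lt; lra|].
  intros u Hu.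
  pose proof (Rmin_l delta 1); pose proof (Rmin_r delta 1).
  set (v := / sqrt (1 + k ^ 2) * u).
  set (psi := jam k v).
  assert (Hpsi : Rabs psi < PI / 2).
  { pose proof (Rabs_jam_le k v Hk'); pose proof (Rabs_inv_sqrt_one_add_sq_mul_le k u).
    pose proof PI2_1; unfold psi, v in *; lra. }
  assert (Hphi : phi u = landen k psi).
  { apply (primitive_inj (hyp_integrand kappa) (fun th => hyp_integrand_continuous kappa th Hkap')
             (fun th => hyp_integrand_ge1 kappa th Hkap')).
    rewrite <- !HUe, HU by lra.
    rewrite HUe, RInt_hyp_integrand_landen by assumption.
    unfold psi; rewrite ellF_jam by exact Hk'.
    unfold v; rewrite <- Rmult_assoc, Rinv_r, Rmult_1_l; [reflexivity|].
    apply Rgt_not_eq, sqrt_lt_R0; nra. }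
  rewrite Hphi, cos_landen_sq by exact Hk'; unfold jcn, jdn, jsn; fold v psi.
  rewrite pow2_sqrt; [reflexivity|].
  pose proof (sq_mul_sq_bounds k _ Hk' (SIN_bound psi)); lra.
Qed.
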